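(* Let $P_X$ be a distribution on a finite alphabet $\mathsf{X}$, $\mathsf{Y}$ a finite reconstruction alphabet, and $W_{X|Y}$ a conditional distribution of $X$ given $Y$. Let $$\mathcal{A}(P_X,W_{X|Y}):=\Big\{P_Y\in\mathcal{P}(\mathsf{Y}):\ \sum_{y}P_Y(y)W_{X|Y}(x|y)=P_X(x)\ \text{for all }x\in\mathsf{X}\Big\}$$ be non-empty, let $R^\star:=\min_{P_Y\in\mathcal{A}(P_X,W_{X|Y})}I(X;Y)$ (mutual information under $P_YW_{X|Y}$), and let $P_Y\in\mathcal{A}(P_X,W_{X|Y})$ attain this minimum. Consider a sequence of $(n,\Theta_n)$ lossy compression protocols (randomized encoders $\mathcal{E}^{(n)}(m|x^n)$ and randomized decoders $\mathcal{D}^{(n)}(y^n|m)$, $m\in[\Theta_n]$) with induced joint distributions $P_{X^nY^n}(x^n,y^n)=P_X^n(x^n)\sum_m\mathcal{E}^{(n)}(m|x^n)\mathcal{D}^{(n)}(y^n|m)$ such that $\lim_{n\to\infty}\frac1n\log\Theta_n=R^\star$ and $\lim_{n\to\infty}\|P_{X^nY^n}-P_{Y^n}W^n_{X|Y}\|_{\mathrm{TV}}=0$, where $P_{Y^n}$ is the $Y^n$-marginal of $P_{X^nY^n}$ and $W^n_{X|Y}(x^n|y^n)=\prod_iW_{X|Y}(x_i|y_i)$. Let $c>0$ be a constant and $b:\mathsf{X}\to\mathbb{R}$ a function, define the distortion $d(x,y)=-c\log_2W_{X|Y}(x|y)+b(x)$ and the level $D:=\mathbb{E}[d(X,Y)]$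 with respect to $P_YW_{X|Y}$. Then the same sequence of protocols achieves the Shannon rate-distortion function of the source $P_X$ with distortion $d$ at distortion level $D$; that is, $$\lim_{n\to\infty}\mathbb{E}\Big[\frac1n\sum_{i=1}^n d(X_i,Y_i)\Big]=D,$$ where the expectation is with respect to $P_{X^nY^n}$.
   Context: $\mathcal{P}(\mathsf{Y})$ denotes the set of probability distributions on $\mathsf{Y}$; $P_X^n$ is the i.i.d. product distribution; $\|\cdot\|_{\mathrm{TV}}$ is total variation distance. The Shannon rate-distortion function of $P_X$ with distortion $d$ at level $D$ is $\min\{I(X;Y):P_{Y|X},\ \mathbb{E}[d(X,Y)]\le D\}$.
   Formalization: $W_{X|Y}(x|y)>0$ holds for every y ∈ 𝖸 and every x ∈ 𝖷 with $P_X(x)>0$, so d(x,y) is finite wherever the source has mass. The statement above fails without it. *)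

From HB Require Import structures.
From mathcomp Require Import all_boot all_order all_algebra.
From mathcomp Require Import all_classical all_reals all_analysis.
Set Implicit Arguments. Unset Strict Implicit. Unset Printing Implicit Defensive.
Import Order.TTheory GRing.Theory Num.Theory.
Local Open Scope ring_scope.

Section Defs.
Variable R : realType.

Definition is_pmf (T : finType) (p : T -> R) : Prop :=
  (forall t, 0 <= p t) /\ \sum_(t : T) p t = 1.

(* W x y = W_{X|Y}(x|y): a conditional distribution of X given Y *)
Definition is_channel (X Y : finType) (W : X -> Y -> R) : Prop :=
  forall y, is_pmf (fun x => W x y).

Definition admissible (X Y : finType) (PX : X -> R) (W : X -> Y -> R)
  (PY : Y -> R) : Prop :=
  is_pmf PY /\ forall x, \sum_(y : Y) PY y * W x y = PX x.

Definition mutual_info (X Y : finType) (P : X -> Y -> R) : R :=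
  \sum_(x : X) \sum_(y : Y)
     P x y * ln (P x y / ((\sum_(y' : Y) P x y') * (\sum_(x' : X) P x' y))).

Definition joint_YW (X Y : finType) (PY : Y -> R) (W : X -> Y -> R) : X -> Y -> R :=
  fun x y => PY y * W x y.

Definition iid (X : finType) (n : nat) (PX : X -> R) (xn : n.-tuple X) : R :=
  \prod_(i < n) PX (tnth xn i).

Definition prod_channel (X Y : finType) (n : nat) (W : X -> Y -> R)
  (xn : n.-tuple X) (yn : n.-tuple Y) : R :=
  \prod_(i < n) W (tnth xn i) (tnth yn i).

Definition protocol_joint (X Y : finType) (n Theta : nat) (PX : X -> R)
  (enc : n.-tuple X -> 'I_Theta -> R) (dec : 'I_Theta -> n.-tuple Y -> R)
  (xn : n.-tuple X) (yn : n.-tuple Y) : R :=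
  iid PX xn * \sum_(m < Theta) enc xn m * dec m yn.

Definition marg_Y (X Y : finType) (n : nat) (P : n.-tuple X -> n.-tuple Y -> R)
  (yn : n.-tuple Y) : R := \sum_(xn : n.-tuple X) P xn yn.

Definition tv_dist (A B : finType) (P Q : A -> B -> R) : R :=
  2^-1 * \sum_(a : A) \sum_(b : B) `|P a b - Q a b|.

Definition log_distortion (X Y : finType) (c : R) (b : X -> R) (W : X -> Y -> R)
  (x : X) (y : Y) : R :=
  - c * (ln (W x y) / ln 2) + b x.

Definition avg_distortion (X Y : finType) (n : nat) (P : n.-tuple X -> n.-tuple Y -> R)
  (d : X -> Y -> R) : R :=
  \sum_(xn : n.-tuple X) \sum_(yn : n.-tuple Y)
     P xn yn * (n%:R^-1 * \sum_(i < n) d (tnth xn i) (tnth yn i)).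

Definition exp_distortion (X Y : finType) (P : X -> Y -> R) (d : X -> Y -> R) : R :=
  \sum_(x : X) \sum_(y : Y) P x y * d x y.

End Defs.

From HB Require Import structures.
From mathcomp Require Import all_boot all_order all_algebra.
From mathcomp Require Import all_classical all_reals all_analysis.
From mathcomp Require Import ring lra.
Set Implicit Arguments. Unset Strict Implicit. Unset Printing Implicit Defensive.
Import Order.TTheory GRing.Theory Num.Theory.
Import numFieldNormedType.Exports.
Local Open Scope classical_set_scope.
Local Open Scope ring_scope.

(* The distortion is affine in [ln W], so the claim is that the normalised log-likelihood
   u_n = E[ln W^n(X^n|Y^n)] / n tends to -H(X|Y), computed under P_Y W.
   Upper bound: Gibbs' inequality against W^n / (P_X^n Theta_n), where Y^n is drawn from
   one of Theta_n decoder laws, gives u_n <= -H(X) + (ln Theta_n) / n -> -H(X) + R* = -H(X|Y).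
   Lower bound: under P_{Y^n} W^n, u_n is -H(X|Y) for the averaged output letter law Q_n,
   replacing P_{X^n Y^n} by P_{Y^n} W^n costs O(TV), and Q_n W is 2 TV-close to P_X.  As
   I = H(X) - H(X|Y) on admissible laws, P_Y maximises H(X|Y) among them, and by compactness
   of the simplex a nearly admissible Q_n cannot exceed that maximum by much. *)

Lemma sum_fibers (V : nmodType) (I J : finType) (phi : I -> J) (G : I -> J -> V) :
  \sum_j \sum_(i | phi i == j) G i j = \sum_i G i (phi i).
Proof.
rewrite [RHS](partition_big phi predT) //=.
by apply: eq_bigr => j _; apply: eq_bigr => i /eqP ->.
Qed.

Lemma sum_fibers2 (R : pzSemiRingType) (A B X Y : finType) (phi : A -> X) (psi : B -> Y)
    (P : A -> B -> R) (F : X -> Y -> R) :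
  \sum_x \sum_y (\sum_(a | phi a == x) \sum_(b | psi b == y) P a b) * F x y =
  \sum_a \sum_b P a b * F (phi a) (psi b).
Proof.
rewrite -(sum_fibers phi (fun a x => \sum_b P a b * F x (psi b))); apply: eq_bigr => x _.
under eq_bigr do rewrite mulr_suml.
rewrite exchange_big /=; apply: eq_bigr => a _.
under eq_bigr do rewrite mulr_suml.
exact: (sum_fibers psi (fun b y => P a b * F x y)).
Qed.

Section TupleProducts.
Variables (R : comPzSemiRingType) (T : finType) (n : nat).

Lemma sum_tuple_prod (F : 'I_n -> T -> R) :
  \sum_(tn : n.-tuple T) \prod_j F j (tnth tn j) = \prod_j \sum_t F j t.
Proof.
rewrite bigA_distr_bigA (reindex (@tuple_of_finfun T n)) /=; last first.
  by exists (@finfun_of_tuple T n) => t _; rewrite ?tuple_of_finfunK ?finfun_of_tupleK.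
by apply: eq_bigr => f _; apply: eq_bigr => j _; rewrite tnth_mktuple.
Qed.

Lemma sum_tuple_prod_fiber (F : 'I_n -> T -> R) (i : 'I_n) (a : T) :
  (forall j, \sum_t F j t = 1) ->
  \sum_(tn : n.-tuple T | tnth tn i == a) \prod_j F j (tnth tn j) = F i a.
Proof.
move=> F1; pose G j t := F j t * ((j != i) || (t == a))%:R.
transitivity (\sum_(tn : n.-tuple T) \prod_j G j (tnth tn j)).
  rewrite big_mkcond; apply: eq_bigr => tn _.
  rewrite big_split /= [X in _ * X](bigD1 i) //= eqxx /=.
  rewrite [X in _ * (_ * X)]big1 => [|j ji]; last by rewrite ji.
  by case: (tnth tn i == a); rewrite ?mulr1 ?mulr0.
rewrite sum_tuple_prod (bigD1 i) //= [X in _ * X]big1 => [|j ji]; last first.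
  by rewrite -[RHS](F1 j); apply: eq_bigr => t _; rewrite /G ji mulr1n mulr1.
rewrite mulr1 (bigD1 a) //= /G !eqxx /= mulr1n mulr1 big1 ?addr0 // => t /negbTE ta.
by rewrite ta mulr0n mulr0.
Qed.

Lemma sum_tuple_prod1 (F : 'I_n -> T -> R) :
  (forall j, \sum_t F j t = 1) -> \sum_(tn : n.-tuple T) \prod_j F j (tnth tn j) = 1.
Proof. by move=> F1; rewrite sum_tuple_prod big1. Qed.

End TupleProducts.

Lemma ln_prod (R : realType) (I : Type) (r : seq I) (P : pred I) (F : I -> R) :
  (forall i, P i -> 0 < F i) ->
  ln (\prod_(i <- r | P i) F i) = \sum_(i <- r | P i) ln (F i).
Proof.
move=> F_gt0; rewrite -[RHS]expRK expR_sum; congr ln.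
by apply: eq_bigr => i Pi; rewrite lnK // posrE F_gt0.
Qed.

Lemma mul_ln_ratio_le (R : realType) (p a b : R) : 0 <= p -> 0 < a -> 0 < b ->
  p * (ln a - ln b) <= p * a / b - p.
Proof.
move=> p_ge0 a_gt0 b_gt0; have ab_gt0 : 0 < a / b by rewrite divr_gt0.
rewrite -ln_div ?posrE // -mulrA -[X in _ <= _ - X]mulr1 -mulrBr ler_wpM2l //.
by have := @le_ln1Dx R (a / b - 1); rewrite [1 + _]addrC subrK; apply; lra.
Qed.

Lemma ler_sum_elem (R : numDomainType) (I : finType) (F : I -> R) (i : I) :
  (forall j, 0 <= F j) -> F i <= \sum_j F j.
Proof. by move=> F_ge0; rewrite (bigD1 i) //= lerDl sumr_ge0. Qed.

Lemma sum_mul_le_dist (R : realDomainType) (A B : finType) (p q g : A -> B -> R) (M : R) :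
  (forall a b, `|g a b| <= M) ->
  \sum_a \sum_b q a b * g a b <= \sum_a \sum_b p a b * g a b + M * \sum_a \sum_b `|p a b - q a b|.
Proof.
move=> g_le; rewrite mulr_sumr -big_split; apply: ler_sum => a _.
rewrite mulr_sumr -big_split; apply: ler_sum => b _.
rewrite -lerBlDl -mulrBl mulrC; apply: (le_trans (ler_norm _)).
by rewrite normrM distrC ler_wpM2r.
Qed.

Lemma mul2_tv_dist (R : realType) (A B : finType) (P Q : A -> B -> R) :
  2 * tv_dist P Q = \sum_a \sum_b `|P a b - Q a b|.
Proof. by rewrite /tv_dist mulrA mulfV ?mul1r. Qed.

Lemma pmf_le1 (R : realType) (T : finType) (p : T -> R) (t : T) : is_pmf p -> p t <= 1.
Proof.
move=> [p_ge0 p1]; rewrite -p1 (bigD1 t) //= lerDl.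
by apply: sumr_ge0 => s _; exact: p_ge0.
Qed.

Section Entropy.
Variable R : realType.

Definition entropy (T : finType) (p : T -> R) : R := - \sum_t p t * ln (p t).

Definition cond_entropy (X Y : finType) (Q : Y -> R) (W : X -> Y -> R) : R :=
  \sum_y Q y * entropy (W ^~ y).

Lemma sum_joint_YW_ln (X Y : finType) (Q : Y -> R) (W : X -> Y -> R) :
  \sum_x \sum_y joint_YW Q W x y * ln (W x y) = - cond_entropy Q W.
Proof.
rewrite /cond_entropy /entropy -sumrN exchange_big /=; apply: eq_bigr => y _.
by rewrite mulrN opprK mulr_sumr; apply: eq_bigr => x _; rewrite mulrA.
Qed.

Lemma mutual_info_admissible (X Y : finType) (PX : X -> R) (W : X -> Y -> R) (Q : Y -> R) :
  is_channel W -> admissible PX W Q ->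
  mutual_info (joint_YW Q W) = entropy PX - cond_entropy Q W.
Proof.
move=> W_channel [[Q_ge0 Q1] QW_PX].
rewrite /mutual_info /entropy /cond_entropy /joint_YW.
transitivity (\sum_x \sum_y (Q y * (W x y * ln (W x y)) - Q y * W x y * ln (PX x))).
  apply: eq_bigr => x _; apply: eq_bigr => y _; rewrite QW_PX.
  have -> : \sum_x' Q y * W x' y = Q y by rewrite -mulr_sumr (W_channel y).2 mulr1.
  have [->|Qy_neq0] := eqVneq (Q y) 0; first by rewrite !mul0r subr0.
  have [->|Wxy_neq0] := eqVneq (W x y) 0; first by rewrite !(mulr0, mul0r) subr0.
  have Qy_gt0 : 0 < Q y by rewrite lt_def Qy_neq0 Q_ge0.
  have Wxy_gt0 : 0 < W x y by rewrite lt_def Wxy_neq0 (W_channel y).1.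
  have PXx_gt0 : 0 < PX x.
    rewrite -QW_PX (bigD1 y) //= ltr_pwDl ?mulr_gt0 //.
    by apply: sumr_ge0 => z _; rewrite mulr_ge0 // (W_channel z).1.
  rewrite (_ : Q y * W x y / (PX x * Q y) = W x y / PX x); last by field; rewrite !gt_eqF.
  by rewrite ln_div ?posrE //; ring.
under eq_bigr do rewrite sumrB; rewrite sumrB.
have -> : \sum_x \sum_y Q y * (W x y * ln (W x y)) = \sum_y Q y * \sum_x W x y * ln (W x y).
  by rewrite exchange_big /=; apply: eq_bigr => y _; rewrite mulr_sumr.
have -> : \sum_x \sum_y Q y * W x y * ln (PX x) = \sum_x PX x * ln (PX x).
  by apply: eq_bigr => x _; rewrite -mulr_suml QW_PX.
rewrite /entropy; under [X in _ = _ - X]eq_bigr do rewrite mulrN.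
by rewrite sumrN opprK addrC.
Qed.

End Entropy.

Section LetterAverages.
Variables (R : realType) (n : nat).

Definition letter_avg1 (T : finType) (p : n.-tuple T -> R) (t : T) : R :=
  n%:R^-1 * \sum_(i < n) \sum_(tn | tnth tn i == t) p tn.

Definition letter_avg (X Y : finType) (P : n.-tuple X -> n.-tuple Y -> R) (x : X) (y : Y) : R :=
  n%:R^-1 * \sum_(i < n) \sum_(xn | tnth xn i == x) \sum_(yn | tnth yn i == y) P xn yn.

Lemma sum_letter_avg1 (T : finType) (p : n.-tuple T -> R) (F : T -> R) :
  \sum_t letter_avg1 p t * F t = n%:R^-1 * \sum_tn p tn * \sum_i F (tnth tn i).
Proof.
under eq_bigr do rewrite -mulrA mulr_suml.
rewrite -mulr_sumr exchange_big /=; congr (_ * _).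
under [RHS]eq_bigr do rewrite mulr_sumr.
rewrite [RHS]exchange_big /=; apply: eq_bigr => i _.
under eq_bigr do rewrite mulr_suml.
exact: (sum_fibers (fun tn => tnth tn i) (fun tn t => p tn * F t)).
Qed.

Lemma sum_letter_avg (X Y : finType) (P : n.-tuple X -> n.-tuple Y -> R) (F : X -> Y -> R) :
  \sum_x \sum_y letter_avg P x y * F x y =
  n%:R^-1 * \sum_xn \sum_yn P xn yn * \sum_i F (tnth xn i) (tnth yn i).
Proof.
under eq_bigr do under eq_bigr do rewrite -mulrA mulr_suml.
under eq_bigr do rewrite -mulr_sumr exchange_big /=.
rewrite -mulr_sumr exchange_big /=; congr (_ * _).
under [RHS]eq_bigr do under eq_bigr do rewrite mulr_sumr.
under [RHS]eq_bigr do rewrite exchange_big /=.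
rewrite [RHS]exchange_big /=; apply: eq_bigr => i _.
exact: sum_fibers2.
Qed.

Lemma sum_letter_avgY (X Y : finType) (P : n.-tuple X -> n.-tuple Y -> R) (x : X) :
  \sum_y letter_avg P x y = letter_avg1 (fun xn => \sum_yn P xn yn) x.
Proof.
rewrite -mulr_sumr exchange_big /=; congr (_ * _); apply: eq_bigr => i _.
rewrite exchange_big /=; apply: eq_bigr => xn _.
exact: (sum_fibers (fun yn => tnth yn i) (fun yn _ => P xn yn)).
Qed.

Lemma letter_avg_channel (X Y : finType) (W : X -> Y -> R) (m : n.-tuple Y -> R) x y :
  is_channel W ->
  letter_avg (fun xn yn => m yn * prod_channel W xn yn) x y = letter_avg1 m y * W x y.
Proof.
move=> HW; rewrite -mulrA mulr_suml; congr (_ * _); apply: eq_bigr => i _.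
rewrite exchange_big mulr_suml; apply: eq_bigr => yn /eqP yn_i.
rewrite -mulr_sumr -yn_i (sum_tuple_prod_fiber (F := fun j a => W a (tnth yn j))) //.
by move=> j; exact: (HW _).2.
Qed.

Lemma avg_distortion_letter_avg (X Y : finType) (P : n.-tuple X -> n.-tuple Y -> R)
    (d : X -> Y -> R) :
  avg_distortion P d = exp_distortion (letter_avg P) d.
Proof.
rewrite /exp_distortion sum_letter_avg mulr_sumr; apply: eq_bigr => xn _.
by rewrite mulr_sumr; apply: eq_bigr => yn _; rewrite mulrCA.
Qed.

Hypothesis n_gt0 : (0 < n)%N.

Lemma sum_const_ord_inv (c : R) : n%:R^-1 * \sum_(i < n) c = c.
Proof. by rewrite sumr_const card_ord -[c *+ n]mulr_natl mulrA mulVf ?mul1r // pnatr_eq0 -lt0n. Qed.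

Lemma letter_avg1_pmf (T : finType) (p : n.-tuple T -> R) : is_pmf p -> is_pmf (letter_avg1 p).
Proof.
move=> [p_ge0 p1]; split => [t|].
  rewrite mulr_ge0 ?invr_ge0 ?ler0n //.
  by apply: sumr_ge0 => i _; apply: sumr_ge0 => tn _.
transitivity (\sum_t letter_avg1 p t * 1); first by under [RHS]eq_bigr do rewrite mulr1.
by rewrite sum_letter_avg1 -mulr_suml p1 mul1r sum_const_ord_inv.
Qed.

Lemma letter_avg1_iid (X : finType) (PX : X -> R) (x : X) :
  is_pmf PX -> letter_avg1 (@iid R X n PX) x = PX x.
Proof.
move=> [_ PX1]; rewrite -[RHS]sum_const_ord_inv /letter_avg1; congr (_ * _).
by apply: eq_bigr => i _; exact: (sum_tuple_prod_fiber (F := fun=> PX)).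
Qed.

Lemma letter_avg_dist_le (X Y : finType) (P Q : n.-tuple X -> n.-tuple Y -> R) :
  \sum_x \sum_y `|letter_avg P x y - letter_avg Q x y| <= \sum_xn \sum_yn `|P xn yn - Q xn yn|.
Proof.
pose D : n.-tuple X -> n.-tuple Y -> R := fun xn yn => `|P xn yn - Q xn yn|.
have le_avg x y : `|letter_avg P x y - letter_avg Q x y| <= letter_avg D x y.
  rewrite -mulrBr normrM ger0_norm ?invr_ge0 ?ler0n // ler_wpM2l ?invr_ge0 ?ler0n //.
  rewrite -sumrB; apply: (le_trans (ler_norm_sum _ _ _)); apply: ler_sum => i _.
  rewrite -sumrB; apply: (le_trans (ler_norm_sum _ _ _)); apply: ler_sum => xn _.
  by rewrite -sumrB; exact: ler_norm_sum.
apply: (le_trans (ler_sum _ (fun x _ => ler_sum _ (fun y _ => le_avg x y)))).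
suff -> : \sum_x \sum_y letter_avg D x y = \sum_xn \sum_yn D xn yn by [].
transitivity (\sum_x \sum_y letter_avg D x y * 1).
  by under [RHS]eq_bigr do under eq_bigr do rewrite mulr1.
rewrite sum_letter_avg /=; under eq_bigr do rewrite -mulr_suml.
by rewrite -mulr_suml mulrCA sum_const_ord_inv mulr1.
Qed.

End LetterAverages.

Lemma exp_log_distortion (R : realType) (X Y : finType) (P : X -> Y -> R) (c : R) (b : X -> R)
    (W : X -> Y -> R) :
  exp_distortion P (log_distortion c b W) =
  - c / ln 2 * \sum_x \sum_y P x y * ln (W x y) + \sum_x (\sum_y P x y) * b x.
Proof.
rewrite /exp_distortion /log_distortion mulr_sumr -big_split /=; apply: eq_bigr => x _.
rewrite mulr_sumr mulr_suml -big_split /=; apply: eq_bigr => y _; ring.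
Qed.

Section Protocol.
Variables (R : realType) (X Y : finType) (PX : X -> R) (W : X -> Y -> R) (n Th : nat)
  (enc : n.-tuple X -> 'I_Th -> R) (dec : 'I_Th -> n.-tuple Y -> R).
Hypotheses (PX_pmf : is_pmf PX) (W_channel : is_channel W)
  (enc_pmf : forall xn, is_pmf (enc xn)) (dec_pmf : forall m, is_pmf (dec m)).

Let P := protocol_joint PX enc dec.
Let kernel xn yn := \sum_(m < Th) enc xn m * dec m yn.

Lemma iid_ge0 (xn : n.-tuple X) : 0 <= iid PX xn.
Proof. by apply: prodr_ge0 => i _; exact: PX_pmf.1. Qed.

Lemma kernel_ge0 xn yn : 0 <= kernel xn yn.
Proof. by apply: sumr_ge0 => m _; rewrite mulr_ge0 ?(enc_pmf xn).1 ?(dec_pmf m).1. Qed.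

Lemma protocol_joint_ge0 xn yn : 0 <= P xn yn.
Proof. exact: mulr_ge0 (iid_ge0 _) (kernel_ge0 _ _). Qed.

Lemma sum_protocol_jointY xn : \sum_yn P xn yn = iid PX xn.
Proof.
rewrite -mulr_sumr exchange_big /= -[RHS]mulr1 -(enc_pmf xn).2; congr (_ * _).
by apply: eq_bigr => m _; rewrite -mulr_sumr (dec_pmf m).2 mulr1.
Qed.

Lemma sum_protocol_joint : \sum_xn \sum_yn P xn yn = 1.
Proof.
under eq_bigr do rewrite sum_protocol_jointY.
exact: (sum_tuple_prod1 (F := fun=> PX) (fun=> PX_pmf.2)).
Qed.

Lemma marg_Y_pmf : is_pmf (marg_Y P).
Proof.
split => [yn|]; first by apply: sumr_ge0 => xn _; exact: protocol_joint_ge0.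
by rewrite exchange_big; exact: sum_protocol_joint.
Qed.

Lemma protocol_index_gt0 : (0 < Th)%N.
Proof.
case: (pickP (@predT 'I_Th)) => [m _|no_index]; first exact: leq_ltn_trans (leq0n m) (ltn_ord m).
have := sum_protocol_joint; rewrite big1 => [/eqP|xn _]; first by rewrite eq_sym oner_eq0.
by rewrite big1 // => yn _; rewrite /P /protocol_joint big1 ?mulr0 // => m; have := no_index m.
Qed.

Lemma sum_prod_channel (yn : n.-tuple Y) : \sum_xn prod_channel W xn yn = 1.
Proof. exact: (sum_tuple_prod1 (F := fun j a => W a (tnth yn j)) (fun j => (W_channel _).2)). Qed.

Lemma sum_kernel_channel_le :
  \sum_xn \sum_yn kernel xn yn * prod_channel W xn yn <= Th%:R.
Proof.
apply: (@le_trans _ _ (\sum_xn \sum_yn (\sum_(m < Th) dec m yn) * prod_channel W xn yn)).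
  apply: ler_sum => xn _; apply: ler_sum => yn _.
  apply: ler_wpM2r; first by apply: prodr_ge0 => i _; exact: (W_channel _).1.
  apply: ler_sum => m _; rewrite ler_piMl ?(dec_pmf m).1 //; exact: pmf_le1 (enc_pmf xn).
rewrite exchange_big /=; under eq_bigr do rewrite -mulr_sumr.
under eq_bigr do rewrite sum_prod_channel mulr1.
by rewrite exchange_big /=; under eq_bigr do rewrite (dec_pmf _).2; rewrite sumr_const card_ord.
Qed.

Hypothesis W_gt0 : forall x y, 0 < PX x -> 0 < W x y.

Lemma protocol_loglik_pointwise xn yn :
  P xn yn * \sum_i ln (W (tnth xn i) (tnth yn i)) - kernel xn yn * prod_channel W xn yn / Th%:R <=
  P xn yn * \sum_i ln (PX (tnth xn i)) + P xn yn * ln Th%:R - P xn yn.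
Proof.
have Th_gt0 : 0 < Th%:R :> R by rewrite ltr0n protocol_index_gt0.
have [P0|P_neq0] := eqVneq (P xn yn) 0.
  rewrite P0 !mul0r !addr0 subr0 sub0r oppr_le0 divr_ge0 ?mulr_ge0 ?kernel_ge0 ?(ltW Th_gt0) //.
  by apply: prodr_ge0 => i _; exact: (W_channel _).1.
have iid_gt0 : 0 < iid PX xn.
  rewrite lt_def iid_ge0 andbT; apply: contra P_neq0 => /eqP iid0.
  by rewrite /P /protocol_joint iid0 mul0r.
have PX_gt0 i : 0 < PX (tnth xn i).
  rewrite lt_def PX_pmf.1 andbT; apply: contraTneq iid_gt0 => PXi0.
  by rewrite /iid (bigD1 i) //= PXi0 mul0r ltxx.
have ln_channel : ln (prod_channel W xn yn) = \sum_i ln (W (tnth xn i) (tnth yn i)).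
  by apply: ln_prod => i _; exact: W_gt0.
have ln_iid : ln (iid PX xn) = \sum_i ln (PX (tnth xn i)) by exact: ln_prod.
have channel_gt0 : 0 < prod_channel W xn yn by apply: prodr_gt0 => i _; exact: W_gt0.
have := mul_ln_ratio_le (protocol_joint_ge0 xn yn) channel_gt0 (mulr_gt0 iid_gt0 Th_gt0).
rewrite lnM ?posrE // ln_channel ln_iid.
rewrite (_ : P xn yn * _ / _ = kernel xn yn * prod_channel W xn yn / Th%:R); last first.
  by rewrite /P /protocol_joint /kernel; field; rewrite !gt_eqF.
lra.
Qed.

Lemma protocol_loglik_le :
  \sum_xn \sum_yn P xn yn * \sum_i ln (W (tnth xn i) (tnth yn i)) <=
  \sum_xn \sum_yn P xn yn * \sum_i ln (PX (tnth xn i)) + ln Th%:R.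
Proof.
have Th_gt0 : 0 < Th%:R :> R by rewrite ltr0n protocol_index_gt0.
rewrite -[ln _]mul1r -[X in X * ln _]sum_protocol_joint mulr_suml.
under [X in _ <= _ + X]eq_bigr do rewrite mulr_suml.
rewrite -big_split /=; under [X in _ <= X]eq_bigr do rewrite -big_split /=.
rewrite -subr_ge0 -sumrB; under eq_bigr do rewrite -sumrB.
apply: (@le_trans _ _ (\sum_xn \sum_yn (P xn yn - kernel xn yn * prod_channel W xn yn / Th%:R))).
  under eq_bigr do rewrite sumrB; rewrite sumrB sum_protocol_joint subr_ge0.
  under eq_bigr do rewrite -mulr_suml.
  by rewrite -mulr_suml ler_pdivrMr // mul1r; exact: sum_kernel_channel_le.
apply: ler_sum => xn _; apply: ler_sum => yn _.
have := protocol_loglik_pointwise xn yn; lra.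
Qed.

Hypothesis n_gt0 : (0 < n)%N.

Lemma protocol_letter_marginal x : \sum_y letter_avg P x y = PX x.
Proof.
rewrite sum_letter_avgY (_ : (fun xn => _) = iid PX); first exact: letter_avg1_iid.
by apply: funext => xn; exact: sum_protocol_jointY.
Qed.

Lemma protocol_letter_loglik_le :
  \sum_x \sum_y letter_avg P x y * ln (W x y) <= - entropy PX + ln Th%:R / n%:R.
Proof.
have n_pos : 0 < n%:R :> R by rewrite ltr0n.
have letter_sum (F : X -> Y -> R) : \sum_xn \sum_yn P xn yn * \sum_i F (tnth xn i) (tnth yn i) =
    n%:R * \sum_x \sum_y letter_avg P x y * F x y.
  by rewrite sum_letter_avg mulVKf ?gt_eqF.
have marginal_loglik : \sum_x \sum_y letter_avg P x y * ln (PX x) = - entropy PX.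
  rewrite /entropy opprK; apply: eq_bigr => x _.
  by rewrite -mulr_suml protocol_letter_marginal.
have := protocol_loglik_le.
rewrite (letter_sum (fun x y => ln (W x y))) (letter_sum (fun x _ => ln (PX x))).
rewrite marginal_loglik => loglik_le.
by rewrite -(ler_pM2l n_pos) mulrDr mulrCA mulfV ?gt_eqF ?mulr1.
Qed.

Let Pw xn yn := marg_Y P yn * prod_channel W xn yn.
Let Q := letter_avg1 (marg_Y P).

Lemma protocol_output_pmf : is_pmf Q.
Proof. by apply: (letter_avg1_pmf n_gt0); exact: marg_Y_pmf. Qed.

Lemma protocol_output_near_admissible :
  \sum_x `|\sum_y Q y * W x y - PX x| <= 2 * tv_dist P Pw.
Proof.
rewrite mul2_tv_dist; apply: le_trans (letter_avg_dist_le n_gt0 P Pw).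
apply: ler_sum => x _; rewrite -(protocol_letter_marginal x) -sumrB.
apply: (le_trans (ler_norm_sum _ _ _)); apply: ler_sum => y _.
by rewrite /Q -(letter_avg_channel _ _ _ W_channel) distrC.
Qed.

Lemma protocol_letter_loglik_ge :
  - cond_entropy Q W - (\sum_x \sum_y `|ln (W x y)|) * (2 * tv_dist P Pw) <=
  \sum_x \sum_y letter_avg P x y * ln (W x y).
Proof.
set M := \sum_x \sum_y `|ln (W x y)|.
have M_ge0 : 0 <= M by do 2![apply: sumr_ge0 => ? _].
have ln_le a b : `|ln (W a b)| <= M.
  apply: (le_trans (ler_sum_elem (F := fun y => `|ln (W a y)|) b (fun y => normr_ge0 _))).
  apply: (ler_sum_elem (F := fun x => \sum_y `|ln (W x y)|)) => x.
  by apply: sumr_ge0 => y _.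
have Pw_loglik : \sum_x \sum_y letter_avg Pw x y * ln (W x y) = - cond_entropy Q W.
  rewrite -sum_joint_YW_ln; apply: eq_bigr => x _; apply: eq_bigr => y _.
  by rewrite letter_avg_channel.
have := sum_mul_le_dist (letter_avg P) (letter_avg Pw) ln_le.
rewrite Pw_loglik mul2_tv_dist.
have := ler_wpM2l M_ge0 (letter_avg_dist_le n_gt0 P Pw); lra.
Qed.

End Protocol.

Lemma compact_robust_le (R : realType) (T : topologicalType) (K : set T) (g h : T -> R) (v e : R) :
  compact K -> continuous g -> continuous h -> 0 < e ->
  (forall t, K t -> g t <= 0 -> h t <= v) ->
  exists2 d, 0 < d & forall t, K t -> g t <= d -> h t <= v + e.
Proof.
move=> K_compact g_cont h_cont e_gt0 h_le; apply: contrapT => no_margin.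
pose B d := [set t | K t /\ g t <= d /\ v + e <= h t].
have B_nonempty d : 0 < d -> B d !=set0.
  move=> d_gt0; apply: contrapT => B_empty; apply: no_margin; exists d => // t Kt gt.
  rewrite leNgt; apply/negP => ht; apply: B_empty; exists t; split => //; split => //.
  exact: ltW.
pose F := filter_from [set d : R | 0 < d] B.
have F_filter : Filter F.
  apply: filter_from_filter; first by exists 1; rewrite /= ltr01.
  move=> d1 d2 d1_gt0 d2_gt0; exists (Num.min d1 d2); first by rewrite /= lt_min d1_gt0.
  move=> t [Kt [gt ht]]; have gt1 : g t <= d1 by rewrite (le_trans gt) // ge_min lexx.
  have gt2 : g t <= d2 by rewrite (le_trans gt) // ge_min lexx orbT.
  by do !split.
have F_proper : ProperFilter F by apply: filter_from_proper.
have [p [Kp p_cluster]] : K `&` cluster F !=set0.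
  by apply: K_compact; exists 1 => [|t []] //; rewrite /= ltr01.
have in_closed C : F C -> closed C -> C p.
  move=> FC C_closed; rewrite (closure_id C).1 //.
  by rewrite clusterE in p_cluster; exact: p_cluster.
have gp_le0 : g p <= 0.
  apply/ler_addgt0Pr => d d_gt0; rewrite add0r.
  apply: (in_closed [set t | g t <= d]); first by exists d => // t [_ []].
  exact: (@preimage_closed _ _ g [set x | x <= d] (fun t _ => g_cont t) (@closed_le _ d)).
have hp_ge : v + e <= h p.
  apply: (in_closed [set t | v + e <= h t]); first by exists 1 => [|t [_ []]] //; rewrite /= ltr01.
  exact: (@preimage_closed _ _ h [set x | v + e <= x] (fun t _ => h_cont t) (@closed_ge _ (v + e))).
have := h_le p Kp gp_le0; lra.
Qed.

Section PmfTopology.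
Variables (R : realType) (Y : finType).

Lemma continuous_sum_mulr (w : Y -> R) :
  continuous (fun Q : {ptws Y -> R} => \sum_y Q y * w y).
Proof.
apply: continuous_big => [|y _ Q]; first exact: pseudometric_normed_Zmodule.add_continuous.
apply: (@cvgMr_tmp _ _ _ (@nbhs_filter {ptws Y -> R} Q)).
exact: (@proj_continuous Y (fun=> R) y Q).
Qed.

Lemma compact_pmf : compact [set Q : {ptws Y -> R} | is_pmf Q].
Proof.
have -> : [set Q : {ptws Y -> R} | is_pmf Q] =
    [set Q | forall y, [set` `[(0 : R), 1]] (Q y)] `&` [set Q | \sum_y Q y * 1 = 1].
  apply/seteqP; split => Q /=.
    move=> Q_pmf; split; last by under eq_bigr do rewrite mulr1; exact: Q_pmf.2.
    by move=> y; rewrite in_itv /= Q_pmf.1 pmf_le1.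
  move=> [Q_01 Q1]; split; last by under eq_bigr do rewrite -[Q _]mulr1.
  by move=> y; have := Q_01 y; rewrite /= in_itv => /andP[].
apply: compact_closedI.
  exact: (@tychonoff Y (fun=> R) (fun=> [set` `[(0 : R), 1]]) (fun=> @segment_compact R 0 1)).
have sum_cont : continuous (fun Q : {ptws Y -> R} => \sum_y Q y * 1) by exact: continuous_sum_mulr.
exact: (@preimage_closed _ _ (fun Q : {ptws Y -> R} => \sum_y Q y * 1) [set x | x = 1]
  (fun Q _ => sum_cont Q) (@closed_eq _ 1)).
Qed.

End PmfTopology.

Lemma cond_entropy_near_admissible (R : realType) (X Y : finType) (PX : X -> R) (W : X -> Y -> R)
    (h e : R) :
  (forall Q, admissible PX W Q -> cond_entropy Q W <= h) -> 0 < e ->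
  exists2 d, 0 < d & forall Q, is_pmf Q ->
    \sum_x `|\sum_y Q y * W x y - PX x| <= d -> cond_entropy Q W <= h + e.
Proof.
move=> h_max e_gt0.
have dist_cont : continuous (fun Q : {ptws Y -> R} => \sum_x `|\sum_y Q y * W x y - PX x|).
  apply: continuous_big => [|x _ Q]; first exact: pseudometric_normed_Zmodule.add_continuous.
  apply: (@cvg_norm _ _ _ _ (@nbhs_filter {ptws Y -> R} Q)).
  apply: (@cvgB _ _ _ _ (@nbhs_filter {ptws Y -> R} Q)); last exact: cvg_cst.
  exact: continuous_sum_mulr.
have cond_entropy_cont : continuous (fun Q : {ptws Y -> R} => cond_entropy Q W).
  exact: continuous_sum_mulr.
apply: (compact_robust_le (@compact_pmf R Y) dist_cont cond_entropy_cont e_gt0).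
move=> Q Q_pmf dist_le0; apply: h_max; split => // x; apply/eqP.
rewrite -subr_eq0 -normr_eq0; apply/eqP; move: x isT; apply: psumr_eq0P => // .
by apply/le_anti; rewrite dist_le0 sumr_ge0.
Qed.
Lemma cvg_ub_lb (R : realFieldType) (u a : nat -> R) (l : R) :
  (\forall n \near \oo, u n <= a n) -> a @ \oo --> l ->
  (forall e, 0 < e -> \forall n \near \oo, l - e <= u n) -> u @ \oo --> l.
Proof.
move=> u_le_a a_cvg u_lb; apply/cvgrPdist_le => e e_gt0.
have a_lt : \forall n \near \oo, a n < l + e by apply: (cvgr_lt l); rewrite // ltrDl.
near=> n; have : u n <= a n by near: n.
have : a n < l + e by near: n.
have : l - e <= u n by near: n; exact: u_lb.
by rewrite ler_norml; lra.
Unshelve. all: by end_near.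
Qed.

Section ProtocolSequence.
Variables (R : realType) (X Y : finType) (PX : X -> R) (W : X -> Y -> R) (PY : Y -> R)
  (Theta : nat -> nat) (enc : forall n, n.-tuple X -> 'I_(Theta n) -> R)
  (dec : forall n, 'I_(Theta n) -> n.-tuple Y -> R).
Arguments enc : clear implicits.
Arguments dec : clear implicits.

Local Notation P n := (protocol_joint PX (enc n) (dec n)).
Local Notation Pw n := (fun xn yn => marg_Y (P n) yn * prod_channel W xn yn).

Hypotheses (PX_pmf : is_pmf PX) (W_channel : is_channel W) (PY_adm : admissible PX W PY)
  (PY_opt : forall Q, admissible PX W Q ->
     mutual_info (joint_YW PY W) <= mutual_info (joint_YW Q W))
  (enc_pmf : forall n (xn : n.-tuple X), is_pmf (enc n xn))
  (dec_pmf : forall n (m : 'I_(Theta n)), is_pmf (dec n m))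
  (rate_cvg : (fun n => ln (Theta n)%:R / n%:R) @ \oo --> mutual_info (joint_YW PY W))
  (tv_cvg : (fun n => tv_dist (P n) (Pw n)) @ \oo --> 0)
  (W_gt0 : forall x y, 0 < PX x -> 0 < W x y).

Lemma letter_loglik_cvg :
  (fun n => \sum_x \sum_y letter_avg (P n) x y * ln (W x y)) @ \oo --> - cond_entropy PY W.
Proof.
have rate_eq := mutual_info_admissible W_channel PY_adm.
have PY_max Q : admissible PX W Q -> cond_entropy Q W <= cond_entropy PY W.
  move=> Q_adm; have := PY_opt Q_adm.
  by rewrite rate_eq (mutual_info_admissible W_channel Q_adm); lra.
apply: (cvg_ub_lb (a := fun n => - entropy PX + ln (Theta n)%:R / n%:R)).
- near=> n; apply: protocol_letter_loglik_le => //.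
  by near: n; exact: nbhs_infty_gt.
- rewrite (_ : - cond_entropy PY W = - entropy PX + mutual_info (joint_YW PY W)).
    exact: cvgD (cvg_cst _) rate_cvg.
  by rewrite rate_eq; ring.
move=> e e_gt0; have e2_gt0 : 0 < e / 2 by rewrite divr_gt0.
have [d d_gt0 near_adm] := cond_entropy_near_admissible PY_max e2_gt0.
set M : R := \sum_x \sum_y `|ln (W x y)|.
have tv2_cvg : (fun n => 2 * tv_dist (P n) (Pw n)) @ \oo --> 0.
  by rewrite -(mulr0 2); apply: cvgMl_tmp.
have Mtv2_cvg : (fun n => M * (2 * tv_dist (P n) (Pw n))) @ \oo --> 0.
  by rewrite -(mulr0 M); apply: cvgMl_tmp.
near=> n; have n_gt0 : (0 < n)%N by near: n; exact: nbhs_infty_gt.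
have tv_lt : 2 * tv_dist (P n) (Pw n) < d by near: n; exact: (cvgr_lt 0 tv2_cvg).
have : M * (2 * tv_dist (P n) (Pw n)) < e / 2 by near: n; exact: (cvgr_lt 0 Mtv2_cvg).
have := near_adm _ (protocol_output_pmf PX_pmf (@enc_pmf n) (@dec_pmf n) n_gt0)
  (le_trans (protocol_output_near_admissible PX_pmf W_channel (@enc_pmf n) (@dec_pmf n) n_gt0)
     (ltW tv_lt)).
have := protocol_letter_loglik_ge PX (enc n) (dec n) W_channel n_gt0.
rewrite -/M; lra.
Unshelve. all: by end_near.
Qed.

End ProtocolSequence.

Theorem theorem4 (R : realType) (X Y : finType)
  (PX : X -> R) (W : X -> Y -> R) (PY : Y -> R)
  (Theta : nat -> nat)
  (enc : forall n : nat, n.-tuple X -> 'I_(Theta n) -> R)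
  (dec : forall n : nat, 'I_(Theta n) -> n.-tuple Y -> R)
  (c : R) (b : X -> R) :
  is_pmf PX ->
  is_channel W ->
  admissible PX W PY ->
  (forall Q : Y -> R, admissible PX W Q ->
     mutual_info (joint_YW PY W) <= mutual_info (joint_YW Q W)) ->
  (forall n (xn : n.-tuple X), is_pmf (enc n xn)) ->
  (forall n (m : 'I_(Theta n)), is_pmf (dec n m)) ->
  (fun n : nat => ln (Theta n)%:R / n%:R) @ \oo --> mutual_info (joint_YW PY W) ->
  (fun n : nat =>
     tv_dist (protocol_joint PX (enc n) (dec n))
       (fun xn yn => marg_Y (protocol_joint PX (enc n) (dec n)) yn
                     * prod_channel W xn yn)) @ \oo --> 0 ->
  0 < c ->
  (* d must be real-valued where the source has mass *)
  (forall x y, 0 < PX x -> 0 < W x y) ->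
  (fun n : nat =>
     avg_distortion (protocol_joint PX (enc n) (dec n)) (log_distortion c b W))
    @ \oo --> exp_distortion (joint_YW PY W) (log_distortion c b W).
Proof.
move=> PX_pmf W_channel PY_adm PY_opt enc_pmf dec_pmf rate_cvg tv_cvg _ W_gt0.
have loglik_cvg :=
  letter_loglik_cvg PX_pmf W_channel PY_adm PY_opt enc_pmf dec_pmf rate_cvg tv_cvg W_gt0.
rewrite exp_log_distortion sum_joint_YW_ln.
under eq_bigr do rewrite PY_adm.2.
apply: cvg_trans (cvgD (cvgMl_tmp loglik_cvg) (cvg_cst _)).
apply: near_eq_cvg; near=> n; have n_gt0 : (0 < n)%N by near: n; exact: nbhs_infty_gt.
rewrite avg_distortion_letter_avg exp_log_distortion.
by under [X in _ = _ + X]eq_bigr do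
  rewrite (protocol_letter_marginal PX_pmf (@enc_pmf n) (@dec_pmf n) n_gt0).
Unshelve. all: by end_near.
Qed.
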